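(* Let $t>0$ and $k$ be integers. If there is a wall on $t$ colors whose graph has no clique on $k$ vertices, then there is a wall on $t-1$ colors whose graph has no clique on $k$ vertices.
   Context: An interval graph $G=(V,E)$ comes with an interval representation $v\mapsto I_v$ (intervals of $\mathbb{R}$, distinct $u,v$ adjacent iff $I_u\cap I_v\ne\emptyset$); graphs are finite. $N[v]$ is the closed neighborhood of $v$ and $f(U)$ the image of $U$. A wall is a pair $(G,f)$ where $G$ is an interval graph on vertex set $V$ with a given interval representation, $f\colon V\to\{1,2,\dots\}$ is a proper coloring of $G$, and $f(N[v])\supseteq\{1,\dots,f(v)\}$ for every $v\in V$. It is a wall on $t$ colors if $|f(V)|=t$. *)

From Stdlib Require Import Reals.
From mathcomp Require Import all_boot.
Set Implicit Arguments. Unset Strict Implicit. Unset Printing Implicit Defensive.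

(* An interval representation of a graph on the finite vertex type V:
   vertex v is the closed interval [l v, r v] of the real line (l v <= r v). *)
Definition interval_rep (V : finType) (l r : V -> R) : Prop :=
  forall v, Rle (l v) (r v).

Definition iadj (V : finType) (l r : V -> R) (u v : V) : Prop :=
  u <> v /\ Rle (Rmax (l u) (l v)) (Rmin (r u) (r v)).

Definition in_closed_nbhd (V : finType) (l r : V -> R) (v w : V) : Prop :=
  w = v \/ iadj l r v w.

Definition is_wall (V : finType) (l r : V -> R) (f : V -> nat) : Prop :=
  [/\ interval_rep l r,
      (forall v, 1 <= f v)%N,
      (forall u v, iadj l r u v -> f u <> f v)
    & (forall v c, (1 <= c <= f v)%N ->
         exists w, in_closed_nbhd l r v w /\ f w = c)].

Definition ncolors (V : finType) (f : V -> nat) : nat :=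
  size (undup [seq f v | v <- enum V]).

Definition has_clique (V : finType) (l r : V -> R) (k : nat) : Prop :=
  exists S : {set V}, #|S| = k /\
    (forall u v, u \in S -> v \in S -> u <> v -> iadj l r u v).

(** Deleting the vertices of colour 1 and lowering every other colour by one
    turns a wall on t colours into a wall on t - 1 colours: the deleted
    vertices form the only colour class that no neighbourhood condition of a
    remaining vertex needs (the condition for colour c + 1 at v supplies the
    neighbour of new colour c), and the new graph is an induced subgraph of
    the old one, so it has no new cliques.  Colour 1 does occur, since any
    vertex v must see it in N[v]. *)
From Stdlib Require Import Reals.
From mathcomp Require Import all_boot.

Set Implicit Arguments.
Unset Strict Implicit.
Unset Printing Implicit Defensive.

Section InducedIntervalGraph.

Variables (V : finType) (P : pred V) (l r : V -> R).

Let lP (x : {v | P v}) := l (val x).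
Let rP (x : {v | P v}) := r (val x).

Lemma iadj_val (x y : {v | P v}) : iadj lP rP x y <-> iadj l r (val x) (val y).
Proof.
split=> [[neq_xy meet] | [neq_xy meet]]; split=> //.
  by move=> /val_inj.
by move=> eq_xy; apply: neq_xy; rewrite eq_xy.
Qed.

Lemma has_clique_val (k : nat) : has_clique lP rP k -> has_clique l r k.
Proof.
move=> [S [cardS cliqueS]]; exists (val @: S); split.
  by rewrite card_imset //; apply: val_inj.
move=> _ _ /imsetP [x xS ->] /imsetP [y yS ->] neq_xy.
by apply/iadj_val; apply: cliqueS => // eq_xy; apply: neq_xy; rewrite eq_xy.
Qed.

End InducedIntervalGraph.

Definition colors (V : finType) (f : V -> nat) : seq nat := undup (codom f).

Lemma ncolorsE (V : finType) (f : V -> nat) : ncolors f = size (colors f).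
Proof. by []. Qed.

Lemma mem_colors (V : finType) (f : V -> nat) c :
  reflect (exists v, f v = c) (c \in colors f).
Proof.
rewrite mem_undup; apply: (iffP codomP) => [[v ->] | [v <-]]; by exists v.
Qed.

Lemma count_gt1 (s : seq nat) :
  uniq s -> 1 \in s -> all (leq 1) s -> count (leq 2) s = (size s).-1.
Proof.
move=> uniq_s s1 pos_s; rewrite -(count_predC (leq 2) s).
suff -> : count (predC (leq 2)) s = 1 by rewrite addn1.
transitivity (count_mem 1 s); last by rewrite count_uniq_mem ?s1.
by apply: eq_in_count => c /(allP pos_s); case: c => [|[|c]].
Qed.

Section DropFirstColor.

Variables (V : finType) (l r : V -> R) (f : V -> nat).

Let W := {v : V | 1 < f v}.
Let lW (x : W) := l (val x).
Let rW (x : W) := r (val x).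
Let fW (x : W) := (f (val x)).-1.

Lemma is_wall_drop_first_color : is_wall l r f -> is_wall lW rW fW.
Proof.
move=> [rep pos proper nbhd]; split.
- by move=> x; apply: rep.
- by move=> [v /= fv_gt1]; rewrite /fW /= -ltnS prednK // ltnW.
- move=> [u fu_gt1] [v fv_gt1] /iadj_val /proper neq_fuv; rewrite /fW /=.
  by move=> /(congr1 S); rewrite !prednK // ltnW.
- move=> [v fv_gt1] c /andP [c_ge1 c_le].
  have fvE : f v = (fW (exist _ v fv_gt1)).+1 by rewrite /fW /= prednK // ltnW.
  have [w [Nvw fwE]] : exists w, in_closed_nbhd l r v w /\ f w = c.+1.
    by apply: nbhd; rewrite fvE ltnS.
  have fw_gt1 : 1 < f w by rewrite fwE ltnS.
  exists (exist _ w fw_gt1); split; last by rewrite /fW /= fwE.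
  by case: Nvw => [eq_wv | adj_vw]; [left; apply: val_inj | right; apply/iadj_val].
Qed.

Lemma colors_drop_first_color :
  perm_eq (colors fW) [seq c.-1 | c <- colors f & 1 < c].
Proof.
apply: uniq_perm; first exact: undup_uniq.
  rewrite map_inj_in_uniq ?filter_uniq ?undup_uniq // => a b.
  rewrite !mem_filter => /andP [a_gt1 _] /andP [b_gt1 _].
  by move=> /(congr1 S); rewrite (ltn_predK a_gt1) (ltn_predK b_gt1).
move=> c; apply/mem_colors/mapP => [[[v fv_gt1] <-] | [d]].
  exists (f v) => //; rewrite mem_filter fv_gt1.
  by apply/mem_colors; exists v.
rewrite mem_filter => /andP [d_gt1 /mem_colors [v fvE]] ->.
have fv_gt1 : 1 < f v by rewrite fvE.
by exists (exist _ v fv_gt1); rewrite /fW /= fvE.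
Qed.

Lemma ncolors_drop_first_color :
  is_wall l r f -> 0 < ncolors f -> ncolors fW = (ncolors f).-1.
Proof.
move=> [_ pos _ nbhd] colors_gt0.
have [v _] : exists v : V, True.
  move: colors_gt0; rewrite ncolorsE; case colorsE: (colors f) => [|c s] // _.
  have /mem_colors [v _] : c \in colors f by rewrite colorsE mem_head.
  by exists v.
have color1 : 1 \in colors f.
  by have [w [_ fw1]] := nbhd v 1 (pos v); apply/mem_colors; exists w.
have pos_colors : all (leq 1) (colors f).
  by apply/allP => _ /mem_colors [w <-]; apply: pos.
rewrite !ncolorsE (perm_size colors_drop_first_color) size_map size_filter.
exact: count_gt1 (undup_uniq _) color1 pos_colors.
Qed.

End DropFirstColor.

Theorem mainTheorem5 (t k : nat) :
  (0 < t)%N ->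
  (exists (V : finType) (l r : V -> R) (f : V -> nat),
      is_wall l r f /\ ncolors f = t /\ ~ has_clique l r k) ->
  exists (V : finType) (l r : V -> R) (f : V -> nat),
      is_wall l r f /\ ncolors f = t.-1 /\ ~ has_clique l r k.
Proof.
move=> t_gt0 [V [l [r [f [wall [ncolors_f no_clique]]]]]].
exists {v : V | 1 < f v}, (fun x => l (val x)), (fun x => r (val x)),
  (fun x => (f (val x)).-1).
split; first exact: is_wall_drop_first_color.
split; first by rewrite (ncolors_drop_first_color wall) ncolors_f.
by move=> /has_clique_val.
Qed.
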